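(* Let $n\ge d$, $L=\{\ell_1,\dots,\ell_n\}$, $R=\{r_1,\dots,r_d\}$. For a linkage $(n,d)$-matching field $\mathcal{M}$ on $L\sqcup R$ let $\varphi_{\mathcal{M}}\colon\binom{L}{n-d+1}\to\{v\in\mathbb{Z}_{\ge0}^d:\sum_i v_i=n-d+1\}$ send $\rho$ to the right degree vector of the Chow covector $\Omega_\rho$ of $\mathcal{M}$. If $\mathcal{M}$ and $\mathcal{M}'$ are linkage $(n,d)$-matching fields on $L\sqcup R$ with $\varphi_{\mathcal{M}}=\varphi_{\mathcal{M}'}$, then $\mathcal{M}=\mathcal{M}'$. That is, a linkage matching field is uniquely determined by its map $\varphi_{\mathcal{M}}$.
   Context: All graphs are bipartite graphs on $L\sqcup R$, identified with their edge sets; the right degree vector is $(\deg r_1,\dots,\deg r_d)$. An $(n,d)$-matching field $\mathcal{M}=(M_\sigma)$ assigns to each $d$-subset $\sigma\subseteq L$ a perfect matching $M_\sigma$ between $\sigma$ and $R$. It is linkage if for every $r_i\in R$ and every $(d+1)$-subset $\tau\subseteq L$ there exist distinct $\ell_j,\ell_{j'}\in\tau$ such that $M_{\tau\setminus\{\ell_j\}}$ and $M_{\tau\setminus\{\ell_{j'}\}}$ agree everywhere except on the edges incident with $r_i$. For an $(n-d+1)$-subset $\rho\subseteq L$, the Chow covector $\Omega_\rho$ is the graph with edges $(\ell_j,r)$ for $\ell_j\in\rho$, where $r$ is the node matched to $\ell_j$ in $M_{(L\setminus\rho)\cup\{\ell_j\}}$. *)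

From mathcomp Require Import all_boot.
Set Implicit Arguments. Unset Strict Implicit. Unset Printing Implicit Defensive.

(* Bipartite graphs on L ⊔ R with L = 'I_n, R = 'I_d, identified with
   their edge sets : {set 'I_n * 'I_d}. *)
Definition bgraph (n d : nat) := {set 'I_n * 'I_d}.

Definition perfect_matching n d (sigma : {set 'I_n}) (E : bgraph n d) : Prop :=
  [/\ forall e, e \in E -> e.1 \in sigma,
      forall l, l \in sigma -> #|[set r : 'I_d | (l, r) \in E]| = 1
    & forall r : 'I_d, #|[set l : 'I_n | (l, r) \in E]| = 1].

Definition matching_field n d (M : {set 'I_n} -> bgraph n d) : Prop :=
  forall sigma : {set 'I_n}, #|sigma| = d -> perfect_matching sigma (M sigma).

Definition off_node n d (r : 'I_d) (E : bgraph n d) : bgraph n d :=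
  [set e in E | e.2 != r].

Definition linkage n d (M : {set 'I_n} -> bgraph n d) : Prop :=
  forall (r : 'I_d) (tau : {set 'I_n}), #|tau| = d.+1 ->
    exists l, exists l', [/\ l \in tau, l' \in tau, l != l' &
      off_node r (M (tau :\ l)) = off_node r (M (tau :\ l'))].

Definition linkage_matching_field n d (M : {set 'I_n} -> bgraph n d) : Prop :=
  matching_field M /\ linkage M.

Definition chow_covector n d (M : {set 'I_n} -> bgraph n d) (rho : {set 'I_n})
  : bgraph n d :=
  [set e : 'I_n * 'I_d | (e.1 \in rho) && (e \in M (e.1 |: ~: rho))].

Definition right_degree n d (E : bgraph n d) : 'I_d -> nat :=
  fun r => #|[set l : 'I_n | (l, r) \in E]|.

Definition phi n d (M : {set 'I_n} -> bgraph n d) (rho : {set 'I_n}) : 'I_d -> nat :=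
  right_degree (chow_covector M rho).

From mathcomp Require Import all_boot zify.

Set Implicit Arguments. Unset Strict Implicit. Unset Printing Implicit Defensive.

(* Fix a (d+1)-set tau and, for each right node r, a pair {u, v} in tau given
   by the linkage axiom at r; call it the edge labelled r.  These d edges form
   a graph on the d+1 nodes of tau in which every connected component K has
   fewer labels than nodes: for z in K, M(tau \ z) matches the labels of K
   injectively into K \ z.  Hence the graph is a spanning tree, and then in
   every M(tau \ z) the node matched to r is u or v.  For a d-set sigma with
   (x, a) in M sigma and s <> x in sigma, this shows that the a-neighbourhood
   of the Chow covector at s + (L \ sigma) is a proper subset of that at
   x + (L \ sigma).  If M sigma and M' sigma differed, the two strict
   inequalities obtained from M and M' would contradict phi_M = phi_M'. *)

Lemma card_set1_inj (T : finType) (P : pred T) x y :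
  #|[set z | P z]| = 1 -> P x -> P y -> x = y.
Proof.
move=> /eqP/cards1P [w Pw] Px Py.
have : x \in [set z | P z] by rewrite inE.
have : y \in [set z | P z] by rewrite inE.
by rewrite Pw !inE => /eqP -> /eqP ->.
Qed.

Lemma card_set1_ex (T : finType) (P : pred T) :
  #|[set z | P z]| = 1 -> exists x, P x.
Proof.
move=> P1; have /card_gt0P [x] : 0 < #|[set z | P z]| by rewrite P1.
by rewrite inE; exists x.
Qed.

Lemma setU1D1 (T : finType) (l s : T) (A : {set T}) :
  l != s -> (l |: A) :\ s = l |: A :\ s.
Proof.
move=> ls; apply/setP => w; rewrite !inE.
by case: (eqVneq w l) => [->|]; rewrite ?ls.
Qed.

Lemma set_connect_closed (T : finType) (e : rel T) x :
  connect_sym e -> closed e [set y | connect e x y].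
Proof.
by move=> sym_e y z yz; rewrite !inE; exact: (connect_closed sym_e x yz).
Qed.

Lemma set_connect_sub (T : finType) (e : rel T) (A : {set T}) x :
  closed e A -> x \in A -> [set y | connect e x y] \subset A.
Proof.
move=> closedA xA; apply/subsetP => y.
by rewrite inE => /(closed_connect closedA) <-.
Qed.

Lemma setD_closed (T : finType) (e : rel T) (A B : {set T}) :
  closed e A -> closed e B -> closed e (A :\: B).
Proof.
by move=> closedA closedB x y xy; rewrite !inE (closedA x y xy) (closedB x y xy).
Qed.

Section PerfectMatching.

Variables (n d : nat) (sigma : {set 'I_n}) (E : bgraph n d).
Hypothesis matchingE : perfect_matching sigma E.

Lemma matching_left_mem e : e \in E -> e.1 \in sigma.
Proof. by case: matchingE => sub _ _; apply: sub. Qed.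

Lemma matching_left_uniq u v r : (u, r) \in E -> (v, r) \in E -> u = v.
Proof. by case: matchingE => _ _ degR; apply: card_set1_inj (degR r). Qed.

Lemma matching_right_uniq l r r' : (l, r) \in E -> (l, r') \in E -> r = r'.
Proof.
move=> lr; case: matchingE => _ degL _.
exact: card_set1_inj (degL _ (matching_left_mem lr)) lr.
Qed.

Lemma matching_left_total l : l \in sigma -> exists r, (l, r) \in E.
Proof. by case: matchingE => _ degL _ /degL /card_set1_ex. Qed.

Lemma matching_right_total r : exists l, (l, r) \in E.
Proof. by case: matchingE => _ _ degR; apply: card_set1_ex (degR r). Qed.

Lemma matching_card_le (A : {set 'I_d}) (B : {set 'I_n}) :
  (forall l r, (l, r) \in E -> r \in A -> l \in B) -> #|A| <= #|B|.
Proof.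
move=> toB; set EA := [set e in E | e.2 \in A].
have A_sub : A \subset [set e.2 | e in EA].
  apply/subsetP => r rA; have [l lr] := matching_right_total r.
  by apply/imsetP; exists (l, r); rewrite // inE lr.
have left_sub : [set e.1 | e in EA] \subset B.
  by apply/subsetP => _ /imsetP [[l r] /setIdP [lr rA] ->]; apply: toB lr rA.
have left_inj : {in EA &, injective (fun e : 'I_n * 'I_d => e.1)}.
  move=> [l r] [l' r'] /setIdP [lr _] /setIdP [lr' _] /= ll'.
  by rewrite -ll' in lr' *; rewrite (matching_right_uniq lr lr').
apply: leq_trans (subset_leq_card A_sub) _.
apply: leq_trans (leq_imset_card _ _) _.
by rewrite -(card_in_imset left_inj) subset_leq_card.
Qed.

End PerfectMatching.

Lemma off_node_mem n d (r r' : 'I_d) l (E E' : bgraph n d) :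
  off_node r E = off_node r E' -> (l, r') \in E -> r' != r -> (l, r') \in E'.
Proof.
move=> EE' lr' r'r; have : (l, r') \in off_node r E by rewrite inE lr'.
by rewrite EE' inE => /andP [].
Qed.

Section LinkageTree.

Variables (n d : nat) (M : {set 'I_n} -> bgraph n d) (tau : {set 'I_n}).
Variable pr : 'I_d -> 'I_n * 'I_n.
Hypothesis card_tau : #|tau| = d.+1.
Hypothesis matching_tau :
  forall z, z \in tau -> perfect_matching (tau :\ z) (M (tau :\ z)).
Hypothesis linkage_pr : forall r, [/\ (pr r).1 \in tau, (pr r).2 \in tau,
  (pr r).1 != (pr r).2 &
  off_node r (M (tau :\ (pr r).1)) = off_node r (M (tau :\ (pr r).2))].

Lemma matched_across r u v : u \in tau -> v \in tau -> u != v ->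
  off_node r (M (tau :\ u)) = off_node r (M (tau :\ v)) -> (v, r) \in M (tau :\ u).
Proof.
move=> ut vt uv Euv.
have vtu : v \in tau :\ u by rewrite !inE eq_sym uv.
have [r0 vr0] := matching_left_total (matching_tau ut) vtu.
case: (eqVneq r0 r) => [<- // | r0r].
have := matching_left_mem (matching_tau vt) (off_node_mem Euv vr0 r0r).
by rewrite !inE eqxx.
Qed.

Lemma pair_matched r : ((pr r).2, r) \in M (tau :\ (pr r).1) /\
                       ((pr r).1, r) \in M (tau :\ (pr r).2).
Proof.
case: (linkage_pr r) => p1t p2t p12 E12; split; first exact: matched_across.
by apply: matched_across (esym E12) => //; rewrite eq_sym.
Qed.

Definition link (r : 'I_d) : rel 'I_n :=
  fun u v => (pr r == (u, v)) || (pr r == (v, u)).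

Definition adj : rel 'I_n := fun u v => [exists r, link r u v].

Definition adj_but (r : 'I_d) : rel 'I_n :=
  fun u v => [exists r', (r' != r) && link r' u v].

Definition component (z : 'I_n) : {set 'I_n} := [set v | connect adj z v].

(* For closed Z these are exactly the edges with both endpoints in Z. *)
Definition labels (Z : {set 'I_n}) : {set 'I_d} := (fun r => (pr r).1) @^-1: Z.

Lemma link_sym r : symmetric (link r).
Proof. by move=> u v; rewrite /link orbC. Qed.

Lemma link_pair r : link r (pr r).1 (pr r).2.
Proof. by rewrite /link -surjective_pairing eqxx. Qed.

Lemma link_off_node r u v :
  link r u v -> off_node r (M (tau :\ u)) = off_node r (M (tau :\ v)).
Proof.
by case: (linkage_pr r) => _ _ _ E12 /orP [] /eqP pr_r; rewrite pr_r /= in E12.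
Qed.

Lemma connect_adj_sym : connect_sym adj.
Proof.
apply: sym_connect_sym => u v.
by apply/existsP/existsP => -[r]; exists r; rewrite link_sym.
Qed.

Lemma connect_adj_but_sym r : connect_sym (adj_but r).
Proof.
apply: sym_connect_sym => u v.
by apply/existsP/existsP => -[r']; exists r'; rewrite link_sym.
Qed.

Lemma matched_connect_but r w u v : (w, r) \in M (tau :\ u) ->
  connect (adj_but r) u v -> (w, r) \in M (tau :\ v).
Proof.
move=> wr uv; set a := [pred z | (w, r) \in M (tau :\ z)].
have closed_a : closed (adj_but r) a.
  apply: (intro_closed (connect_adj_but_sym r) (a := a)).
  move=> x y /existsP [r' /andP [r'r xy]]; rewrite !inE => xw.
  by apply: off_node_mem (link_off_node xy) xw _; rewrite eq_sym.
by rewrite -[_ \in _]/(v \in a) -(closed_connect closed_a uv).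
Qed.

Lemma connect_adj_split r v : connect adj (pr r).1 v ->
  connect (adj_but r) (pr r).1 v || connect (adj_but r) (pr r).2 v.
Proof.
set a := [pred z | connect (adj_but r) (pr r).1 z
                   || connect (adj_but r) (pr r).2 z].
have closed_a : closed adj a.
  apply: (intro_closed connect_adj_sym (a := a)) => x y /existsP [r0 xy] /orP x_a.
  case: (eqVneq r0 r) => [r0r | r0r].
    rewrite r0r in xy; case/orP: xy => /eqP pr_r;
    by rewrite !inE pr_r connect0 ?orbT.
  have step : adj_but r x y by apply/existsP; exists r0; rewrite r0r.
  apply/orP; case: x_a => cx; [left | right];
  exact: connect_trans cx (connect1 step).
by move=> c; rewrite -[_ || _]/(v \in a) -(closed_connect closed_a c) inE connect0.
Qed.

Lemma matched_endpoint_connect z r l : z \in tau -> connect adj z (pr r).1 ->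
  (l, r) \in M (tau :\ z) -> l = (pr r).1 \/ l = (pr r).2.
Proof.
move=> zt c lr; have pm := matching_tau zt.
rewrite connect_adj_sym in c.
have [p21 p12] := pair_matched r.
case/orP: (connect_adj_split c) => [c1 | c2].
  by right; exact: (matching_left_uniq pm lr (matched_connect_but p21 c1)).
by left; exact: (matching_left_uniq pm lr (matched_connect_but p12 c2)).
Qed.

Lemma card_labels_component z :
  z \in tau -> #|labels (component z)| < #|component z|.
Proof.
move=> zt; rewrite (cardsD1 z) inE connect0 add1n ltnS.
apply: (matching_card_le (matching_tau zt)) => l r lr.
have := matching_left_mem (matching_tau zt) lr; rewrite !inE /= => /andP [-> _] c.
have adj12 : adj (pr r).1 (pr r).2 by apply/existsP; exists r; apply: link_pair.
case: (matched_endpoint_connect zt c lr) => -> //.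
exact: connect_trans c (connect1 adj12).
Qed.

Lemma card_labels_split (Z K : {set 'I_n}) : K \subset Z ->
  #|labels K| < #|K| -> #|labels (Z :\: K)| < #|Z :\: K| -> #|labels Z|.+1 < #|Z|.
Proof.
move=> KZ ltK ltZK.
have splitZ : K :|: Z :\: K = Z by rewrite -{2}(setID Z K) (setIidPr KZ).
have le_labels : #|labels Z| <= #|labels K| + #|labels (Z :\: K)|.
  by rewrite -{1}splitZ /labels preimsetU; apply: (leq_card_setU _ _).1.
by have := cardsID K Z; rewrite (setIidPr KZ); lia.
Qed.

Lemma card_labels_lt (Z : {set 'I_n}) z :
  closed adj Z -> Z \subset tau -> z \in Z -> #|labels Z| < #|Z|.
Proof.
move: {2}#|Z| (leqnn #|Z|) => m; elim: m Z z => [|m IH] Z z.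
  by rewrite leqn0 => /eqP/cards0_eq -> _ _; rewrite inE.
move=> leZ closedZ Zt zZ; have zt := subsetP Zt z zZ.
have KZ : component z \subset Z := set_connect_sub closedZ zZ.
have [ZK | /subsetPn [y yZ yK]] := boolP (Z \subset component z).
  have -> : Z = component z by apply/eqP; rewrite eqEsubset ZK KZ.
  exact: card_labels_component.
have ltZK : #|labels (Z :\: component z)| < #|Z :\: component z|.
  apply: (IH _ y); last by rewrite inE yK yZ.
  - have : #|component z| > 0 by apply/card_gt0P; exists z; rewrite inE.
    by have := cardsID (component z) Z; rewrite (setIidPr KZ); lia.
  - exact: setD_closed closedZ (set_connect_closed z connect_adj_sym).
  - exact: subset_trans (subsetDl _ _) Zt.
by apply: ltnW; apply: card_labels_split KZ (card_labels_component zt) ltZK.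
Qed.

Lemma connect_adj_tau z v : z \in tau -> v \in tau -> connect adj z v.
Proof.
(* A second component would give d = #|labels tau| <= #|tau| - 2. *)
move=> zt vt; apply/negPn/negP => zv.
have closed_tau : closed adj tau.
  move=> x y /existsP [r /orP [] /eqP pr_r];
  by case: (linkage_pr r); rewrite pr_r /= => -> ->.
have labels_tau : labels tau = setT.
  by apply/setP => r; rewrite !inE; case: (linkage_pr r).
have ltZK : #|labels (tau :\: component z)| < #|tau :\: component z|.
  apply: (card_labels_lt (z := v)); last by rewrite !inE zv vt.
    exact: setD_closed closed_tau (set_connect_closed z connect_adj_sym).
  exact: subsetDl.
have Ktau : component z \subset tau := set_connect_sub closed_tau zt.
have := card_labels_split Ktau (card_labels_component zt) ltZK.
by rewrite labels_tau cardsT card_ord card_tau ltnn.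
Qed.

Lemma matched_endpoint z r l : z \in tau ->
  (l, r) \in M (tau :\ z) -> l = (pr r).1 \/ l = (pr r).2.
Proof.
move=> zt lr; apply: (matched_endpoint_connect zt _ lr).
by apply: connect_adj_tau => //; case: (linkage_pr r).
Qed.

Lemma matched_exchange x y s a : y \in tau -> s \in tau ->
  (x, a) \in M (tau :\ y) -> (y, a) \in M (tau :\ s) -> (y, a) \in M (tau :\ x).
Proof.
move=> yt st xa ya.
have := matching_left_mem (matching_tau yt) xa; rewrite !inE /= => /andP [xy _].
have [p21 p12] := pair_matched a.
case: (matched_endpoint yt xa) (matched_endpoint st ya) xy => -> [] ->;
by rewrite ?eqxx.
Qed.

End LinkageTree.

Lemma linkage_exchange n d (M : {set 'I_n} -> bgraph n d) (tau : {set 'I_n})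
    x y s a :
  linkage_matching_field M -> #|tau| = d.+1 -> y \in tau -> s \in tau ->
  (x, a) \in M (tau :\ y) -> (y, a) \in M (tau :\ s) -> (y, a) \in M (tau :\ x).
Proof.
move=> [matchingM linkM] card_tau.
have matching_tau z : z \in tau -> perfect_matching (tau :\ z) (M (tau :\ z)).
  by move=> zt; apply: matchingM; move: card_tau; rewrite (cardsD1 z) zt; lia.
have : forall r, exists pq : 'I_n * 'I_n, [/\ pq.1 \in tau, pq.2 \in tau,
    pq.1 != pq.2 & off_node r (M (tau :\ pq.1)) = off_node r (M (tau :\ pq.2))].
  move=> r; have [l [l' [lt l't ll' Ell']]] := linkM r tau card_tau.
  by exists (l, l').
case/fin_all_exists => pr linkage_pr.
exact: (matched_exchange card_tau matching_tau linkage_pr).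
Qed.

Lemma phi_setCU1 n d (M : {set 'I_n} -> bgraph n d) sigma z r :
  phi M (z |: ~: sigma) r =
  #|[set l in z |: ~: sigma | (l, r) \in M (l |: sigma :\ z)]|.
Proof. by apply: eq_card => l; rewrite !inE /= setCU setCK setIC -setDE. Qed.

Lemma card_setU1C n d (sigma : {set 'I_n}) z : #|sigma| = d -> z \in sigma ->
  #|z |: ~: sigma| = n - d + 1.
Proof.
move=> card_sigma zs; rewrite cardsU1 inE zs /=.
have := cardsC sigma; rewrite card_ord card_sigma => card_n.
by rewrite -[X in _ = X - d + 1]card_n addKn addnC.
Qed.

Lemma phi_setCU1_lt n d (M : {set 'I_n} -> bgraph n d) (sigma : {set 'I_n}) x s a :
  linkage_matching_field M -> #|sigma| = d -> x \in sigma -> s \in sigma ->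
  x != s -> (x, a) \in M sigma ->
  phi M (s |: ~: sigma) a < phi M (x |: ~: sigma) a.
Proof.
move=> lmfM card_sigma xs ss xs_neq xa.
have matchingM := lmfM.1 sigma card_sigma.
rewrite !phi_setCU1; apply: proper_card; apply/properP; split.
  apply/subsetP => l; rewrite !inE => /andP [/orP [/eqP -> | ls] la].
    rewrite setD1K // in la.
    by rewrite (matching_left_uniq matchingM la xa) eqxx in xs_neq.
  have [lx l_s] : l != x /\ l != s by split; apply: contraNneq ls => ->.
  rewrite ls orbT /=.
  have card_tau : #|l |: sigma| = d.+1 by rewrite cardsU1 ls card_sigma.
  have := linkage_exchange (x := x) (y := l) (s := s) (a := a) lmfM card_tau.
  by rewrite setU1K // !setU1D1 // !inE eqxx ss orbT; apply.
exists x; first by rewrite !inE eqxx setD1K.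
by rewrite !inE (negbTE xs_neq) xs.
Qed.

Lemma linkage_matching_field_sub n d (M M' : {set 'I_n} -> bgraph n d) :
  linkage_matching_field M -> linkage_matching_field M' ->
  (forall rho : {set 'I_n}, #|rho| = n - d + 1 -> forall r : 'I_d,
      phi M rho r = phi M' rho r) ->
  forall sigma : {set 'I_n}, #|sigma| = d -> M sigma \subset M' sigma.
Proof.
move=> lmfM lmfM' phiE sigma card_sigma; apply/subsetP => -[x a] xa.
have matchingM := lmfM.1 sigma card_sigma.
have matchingM' := lmfM'.1 sigma card_sigma.
have xs : x \in sigma := matching_left_mem matchingM xa.
have [b xb] := matching_left_total matchingM' xs.
have [ba | ba] := eqVneq b a; first by rewrite -ba.
have [s sb] := matching_right_total matchingM b.
have ss : s \in sigma := matching_left_mem matchingM sb.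
have sx : s != x.
  apply: contraNneq ba => sx; rewrite sx in sb.
  by rewrite (matching_right_uniq matchingM xa sb).
have := phi_setCU1_lt lmfM card_sigma ss xs sx sb.
rewrite !phiE ?(card_setU1C card_sigma) // => lt_sx.
have xs_neq : x != s by rewrite eq_sym.
have lt_xs := phi_setCU1_lt lmfM' card_sigma xs ss xs_neq xb.
by have := ltn_trans lt_sx lt_xs; rewrite ltnn.
Qed.

Theorem theorem3p29 (n d : nat) (M M' : {set 'I_n} -> bgraph n d) :
  d <= n ->
  linkage_matching_field M -> linkage_matching_field M' ->
  (forall rho : {set 'I_n}, #|rho| = n - d + 1 -> forall r : 'I_d,
      phi M rho r = phi M' rho r) ->
  forall sigma : {set 'I_n}, #|sigma| = d -> M sigma = M' sigma.
Proof.
move=> _ lmfM lmfM' phiE sigma card_sigma; apply/eqP; rewrite eqEsubset.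
rewrite (linkage_matching_field_sub lmfM lmfM' phiE) //=.
apply: linkage_matching_field_sub lmfM' lmfM _ _ card_sigma.
by move=> rho card_rho r; rewrite phiE.
Qed.
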